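(* Let $X$ be a Polish space and $\lambda$ a probability measure on $X$. Let ${\mathbf T}$ be a thinning kernel of type 2 with weights $(t_{n,j})$ satisfying $t_{m,m}>0$ for all $m\ge0$, and normalizations $Z_m$. Let $(p_n)_{n\in\mathbb N_0}$ be non-negative numbers with $\Xi=\sum_{n\ge0}p_n/n!\in(0,\infty)$ and such that $p_{n_0}=0$ implies $p_n=0$ for all $n\ge n_0$. Let ${\mathsf P}$ be the mixed sample process $${\mathsf P}(\phi)=\frac1\Xi\sum_{n\ge0}\frac{p_n}{n!}\int\phi(\delta_{x_1}+\dots+\delta_{x_n})\,\lambda^n(\mathrm dx_1,\dots,\mathrm dx_n).$$ Then for all non-negative measurable $g$ on $X\times\mathcal M_f(X)$, $$\iint g(x,\mu)\,\delta(\mu,x)\,\mu(\mathrm dx)\,{\mathsf P}(\mathrm d\mu)=\iint g(x,\mu+\delta_x)\,\pi(\mu,\mathrm dx)\,{\mathsf P}(\mathrm d\mu).$$ Here, for ${\mathsf P}$-a.e. $\mu$ with $\mu(X)=m$, $$\pi(\mu,\mathrm dx)=\frac{Z_{m+1}}{Z_m}\,\frac{t_{m+1,m}}{t_{m,m}}\,\frac{p_{m+1}}{p_m}\,\lambda(\mathrm dx),\qquad\delta(\mu,x)=\frac{Z_m}{Z_{m-1}}\cdot\frac{t_{m,m-1}}{t_{m-1,m-1}}.$$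
   Context: $\mathcal M_f(X)$ denotes the set of finite counting measures on $X$, and $|\mu|=\mu(X)$. $\mu^{-[m]}$ is the $m$-th falling factorial measure of $\mu$, defined by $\int g\,\mathrm d\mu^{-[m]}=\int\cdots\int g(y_1,\dots,y_m)(\mu-\delta_{y_1}-\dots-\delta_{y_{m-1}})(\mathrm dy_m)\cdots\mu(\mathrm dy_1)$. Write $\delta_{\mathbf y}=\delta_{y_1}+\dots+\delta_{y_m}$. A thinning kernel of type 2 is given by non-negative numbers $(t_{n,j})_{0\le j\le n}$ via $${\mathbf T}_\mu(\phi)=Z_\mu\sum_{m\ge0}\frac{t_{|\mu|,m}}{m!}\int\phi(\delta_{\mathbf y})\,\mu^{-[m]}(\mathrm d{\mathbf y}),\qquad Z_\mu^{-1}=\sum_{j=0}^{|\mu|}\binom{|\mu|}{j}t_{|\mu|,j}.$$ Since $Z_\mu$ depends only on $|\mu|=m$, it is written $Z_m$. *)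

From mathcomp Require Import all_boot all_order all_algebra.
From mathcomp Require Import all_classical all_reals all_analysis measurable_realfun.
Set Implicit Arguments. Unset Strict Implicit. Unset Printing Implicit Defensive.
Import Order.TTheory GRing.Theory Num.Theory.
Local Open Scope classical_set_scope.
Local Open Scope ring_scope.

Section Defs.
Context {d : measure_display} {X : measurableType d} {R : realType}.

(* Finite counting measures on X are represented by their values on sets:
   a (finite counting) measure mu : set X -> nat.  Elements of M_f(X) are the
   functions [cm s] for s : seq X. *)
Definition Mf := set X -> nat.

Definition cm (s : seq X) : Mf :=
  fun A => count (fun x => `[< A x >]) s.

Definition Mf_add (mu : Mf) (x : X) : Mf := fun A => (mu A + `[< A x >])%N.

(* A list of atoms (with multiplicity) of a finite counting measure mu,
   i.e. some s with cm s = mu (unique up to permutation); [::] if mu is not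
   a finite counting measure. *)
Definition atoms (mu : Mf) : seq X :=
  match pselect (exists s, cm s = mu) with
  | left e => projT1 (cid e)
  | right _ => [::]
  end.

Definition cmint (mu : Mf) (h : X -> \bar R) : \bar R :=
  (\sum_(x <- atoms mu) h x)%E.

Definition Mf_gen : set (set Mf) :=
  [set B | exists A n, measurable A /\ B = [set mu : Mf | mu A = n]].

Definition MfM : measurableType (sigma_display Mf_gen) := g_sigma_algebraType Mf_gen.

Fixpoint iterint (lam : {measure set X -> \bar R}) (n : nat)
  (phi : seq X -> \bar R) : \bar R :=
  match n with
  | 0 => phi [::]
  | n'.+1 => (\int[lam]_x iterint lam n' (fun s => phi (x :: s)))%E
  end.

Definition Xi (p : nat -> R) : \bar R :=
  (\sum_(0 <= n <oo) (p n / (n`!)%:R)%:E)%E.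

(* The mixed sample process, as an integral operator on non-negative
   functionals of the counting measure:
   P(phi) = 1/Xi * sum_n p_n/n! * \int phi(delta_{x_1}+...+delta_{x_n}) lam^n(dx). *)
Definition Pint (lam : {measure set X -> \bar R}) (p : nat -> R)
  (phi : MfM -> \bar R) : \bar R :=
  ((fine (Xi p))^-1%:E *
   \sum_(0 <= n <oo) ((p n / (n`!)%:R)%:E * iterint lam n (fun s => phi (cm s))))%E.

Definition Znorm (t : nat -> nat -> R) (m : nat) : R :=
  (\sum_(0 <= j < m.+1) ('C(m, j))%:R * t m j)^-1.

(* Density constant of pi(mu, dx) w.r.t. lam(dx) when mu(X) = m. *)
Definition pi_const (t : nat -> nat -> R) (p : nat -> R) (m : nat) : R :=
  Znorm t m.+1 / Znorm t m * (t m.+1 m / t m m) * (p m.+1 / p m).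

(* delta(mu, x) when mu(X) = m. *)
Definition delta_const (t : nat -> nat -> R) (m : nat) : R :=
  Znorm t m / Znorm t m.-1 * (t m m.-1 / t m.-1 m.-1).

End Defs.

From mathcomp Require Import all_boot all_order all_algebra.
From mathcomp Require Import all_classical all_reals all_analysis measurable_realfun.
From mathcomp.algebra_tactics Require Import ring.
Import Order.TTheory GRing.Theory Num.Theory.
Local Open Scope classical_set_scope.
Local Open Scope ring_scope.

(* Under the mixed sample process, given mu(X) = n the atoms of mu are n
   independent lam-distributed points, so both sides are series over n whose
   terms are integrals against lam^n.  On the left, a sum of g over the atoms
   of mu is, by exchangeability of lam^n (rotate the coordinates and use
   Tonelli), n times g evaluated at the first atom; on the right, adding an
   independent lam-point x to mu gives exactly the same integral against
   lam^(n+1).  The two series therefore agree term by term after a shift by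
   one, because the constants satisfy
     p_(n+1)/(n+1)! * (n+1) * delta_(n+1) = p_n/n! * pi_n.
   The factor 1/Xi is common to both sides. *)

Section seq_measurability.
Set Implicit Arguments. Unset Strict Implicit.
Context (d : measure_display) (X : measurableType d) (R : realType).
Local Open Scope ereal_scope.

(* [seq X] carries no sigma-algebra: a function of a finite sequence of points
   is called measurable when it is measurable along every finite family of
   measurable coordinate maps. *)
Definition measurable_coords d' (U : measurableType d') (xs : seq (U -> X)) :=
  foldr (fun f P => measurable_fun setT f /\ P) True xs.

Definition seq_measurable (f : seq X -> \bar R) :=
  forall d' (U : measurableType d') (xs : seq (U -> X)), measurable_coords xs ->
    measurable_fun setT (fun u => f [seq x u | x <- xs]).

Definition jointly_measurable d' (T : measurableType d') (f : T -> seq X -> \bar R) :=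
  forall d'' (U : measurableType d'') (a : U -> T) (xs : seq (U -> X)),
    measurable_fun setT a -> measurable_coords xs ->
    measurable_fun setT (fun u => f (a u) [seq x u | x <- xs]).

Lemma measurable_coords_cat d' (U : measurableType d') (s1 s2 : seq (U -> X)) :
  measurable_coords (s1 ++ s2) <-> measurable_coords s1 /\ measurable_coords s2.
Proof.
elim: s1 => [|f s1 IH] /=; first by split=> [|[]].
by rewrite IH; split=> [[mf [m1 m2]]|[[mf m1] m2]].
Qed.

Lemma measurable_coords_rot d' (U : measurableType d') (s : seq (U -> X)) i :
  measurable_coords s -> measurable_coords (rot i s).
Proof.
rewrite -{1}(cat_take_drop i s) /rot => /measurable_coords_cat[mt md].
exact/measurable_coords_cat.
Qed.

Lemma measurable_coords_rcons d' (U : measurableType d') (s : seq (U -> X)) f :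
  measurable_coords s -> measurable_fun setT f -> measurable_coords (rcons s f).
Proof. by move=> ms mf; rewrite -cats1; apply/measurable_coords_cat. Qed.

Lemma jointly_measurable_cons d1 d2 (T : measurableType d1) (V : measurableType d2)
    (f : T -> seq X -> \bar R) (b : V -> T) (c : V -> X) :
  measurable_fun setT b -> measurable_fun setT c -> jointly_measurable f ->
  jointly_measurable (fun v s => f (b v) (c v :: s)).
Proof.
move=> mb mc mf d'' U a xs ma mxs.
apply: (mf _ _ (b \o a) ((c \o a) :: xs)); first exact: measurableT_comp.
by split => //; exact: measurableT_comp.
Qed.

Lemma seq_measurable_cons f :
  seq_measurable f -> jointly_measurable (fun (x : X) s => f (x :: s)).
Proof. by move=> mf d'' U a xs ma mxs; apply: (mf _ _ (a :: xs)). Qed.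

Lemma seq_measurable_cons_cst f y :
  seq_measurable f -> seq_measurable (fun s => f (y :: s)).
Proof.
move=> mf d'' U xs mxs; apply: (mf _ _ (cst y :: xs)).
by split => //; exact: measurable_cst.
Qed.

Lemma seq_measurable_rcons f :
  seq_measurable f -> jointly_measurable (fun (x : X) s => f (rcons s x)).
Proof.
move=> mf d'' U a xs ma mxs.
have := mf _ _ (rcons xs a) (measurable_coords_rcons mxs ma).
by congr measurable_fun; apply/funext => u; rewrite map_rcons.
Qed.

Lemma seq_measurable_rot f i :
  seq_measurable f -> seq_measurable (fun s => f (rot i s)).
Proof.
move=> mf d'' U xs mxs.
have := mf _ _ (rot i xs) (measurable_coords_rot i mxs).
by congr measurable_fun; apply/funext => u; rewrite map_rot.
Qed.

End seq_measurability.

Section iterated_integral.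
Set Implicit Arguments. Unset Strict Implicit.
Context (d : measure_display) (X : measurableType d) (R : realType)
  (lam : {sigma_finite_measure set X -> \bar R}).
Local Open Scope ereal_scope.

Lemma iterint_ge0 n f : (forall s, 0 <= f s) -> 0 <= iterint lam n f.
Proof.
elim: n f => [|n IH] f f0 //=.
by apply: integral_ge0 => x _; apply: IH.
Qed.

Lemma eq_iterint n f g : (forall s, size s = n -> f s = g s) ->
  iterint lam n f = iterint lam n g.
Proof.
elim: n f g => [|n IH] f g fg /=; first exact: fg.
by apply: eq_integral => x _; apply: IH => s hs; apply: fg; rewrite /= hs.
Qed.

Lemma iterint_rcons n f :
  iterint lam n.+1 f = iterint lam n (fun s => \int[lam]_x f (rcons s x)).
Proof.
elim: n f => [|n IH] f //=.
by apply: eq_integral => y _; exact: (IH (fun s => f (y :: s))).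
Qed.

Lemma measurable_iterint n d' (T : measurableType d') (f : T -> seq X -> \bar R) :
  (forall t s, 0 <= f t s) -> jointly_measurable f ->
  measurable_fun setT (fun t => iterint lam n (f t)).
Proof.
elim: n d' T f => [|n IH] d' T f f0 mf /=.
  exact: (mf _ _ id [::] (@measurable_id _ T setT) I).
have := IH _ (T * X)%type (fun tx s => f tx.1 (tx.2 :: s)) (fun _ _ => f0 _ _)
  (jointly_measurable_cons measurable_fst measurable_snd mf).
move=> /(measurable_fun_fubini_tonelli_F (m2 := lam)); apply.
by move=> z; apply: iterint_ge0.
Qed.

Lemma iterint_integral_comm n (F : X -> seq X -> \bar R) :
  (forall x s, 0 <= F x s) -> jointly_measurable F ->
  iterint lam n (fun s => \int[lam]_x F x s) = \int[lam]_x iterint lam n (F x).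
Proof.
elim: n F => [|n IH] F F0 mF //=.
transitivity (\int[lam]_y \int[lam]_x iterint lam n (fun s => F x (y :: s))).
  apply: eq_integral => y _; apply: (IH (fun x s => F x (y :: s))) => //.
  exact: (jointly_measurable_cons (@measurable_id _ X setT) (measurable_cst y) mF).
have mF' := measurable_iterint n (fun _ _ => F0 _ _)
  (jointly_measurable_cons measurable_snd measurable_fst mF).
exact: (fubini_tonelli (m1 := lam) (m2 := lam) _ mF'
  (fun z => iterint_ge0 _ (fun s => F0 _ _))).
Qed.

Lemma iterint_sum n I (r : seq I) (F : I -> seq X -> \bar R) :
  (forall i s, 0 <= F i s) -> (forall i, seq_measurable (F i)) ->
  iterint lam n (fun s => \sum_(i <- r) F i s) = \sum_(i <- r) iterint lam n (F i).
Proof.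
elim: n F => [|n IH] F F0 mF //=.
transitivity (\int[lam]_x \sum_(i <- r) iterint lam n (fun s => F i (x :: s))).
  apply: eq_integral => x _; apply: (IH (fun i s => F i (x :: s))) => // i.
  exact: seq_measurable_cons_cst.
apply: ge0_integral_sum => //.
- by move=> i; exact: measurable_iterint (fun _ _ => F0 _ _)
    (seq_measurable_cons (mF i)).
- by move=> i x _; apply: iterint_ge0.
Qed.

Lemma iterintZr n f (k : R) : (0 <= k)%R -> (forall s, 0 <= f s) -> seq_measurable f ->
  iterint lam n (fun s => f s * k%:E) = iterint lam n f * k%:E.
Proof.
move=> k0; elim: n f => [|n IH] f f0 mf //=.
transitivity (\int[lam]_x (iterint lam n (fun s => f (x :: s)) * k%:E)).
  apply: eq_integral => x _; apply: (IH (fun s => f (x :: s))) => //.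
  exact: seq_measurable_cons_cst.
apply: ge0_integralZr => //.
- exact: measurable_iterint (fun _ _ => f0 _) (seq_measurable_cons mf).
- by move=> x _; apply: iterint_ge0.
Qed.

(* The integral in the first coordinate is moved to the last one by Tonelli. *)
Lemma iterint_rot1 n f : (forall s, 0 <= f s) -> seq_measurable f ->
  iterint lam n.+1 (fun s => f (rot 1 s)) = iterint lam n.+1 f.
Proof.
move=> f0 mf; rewrite [RHS]iterint_rcons iterint_integral_comm //=; last first.
  exact: seq_measurable_rcons.
by apply: eq_integral => x _; apply: eq_iterint => s _; rewrite rot1_cons.
Qed.

Lemma iterint_rot n f i : (i <= n)%N -> (forall s, 0 <= f s) -> seq_measurable f ->
  iterint lam n (fun s => f (rot i s)) = iterint lam n f.
Proof.
move=> + f0 mf; elim: i => [|i IH] hi.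
  by apply: eq_iterint => s _; rewrite rot0.
case: n hi IH => [//|n] hi IH.
rewrite -IH ?(ltnW hi) // -(@iterint_rot1 n (fun s => f (rot i s))) //.
  by apply: eq_iterint => s hs; rewrite -rotD ?addn1 ?hs.
exact: seq_measurable_rot.
Qed.

End iterated_integral.

Section counting_measures.
Set Implicit Arguments. Unset Strict Implicit.
Context (d : measure_display) (X : measurableType d) (R : realType).
Local Open Scope ereal_scope.

Lemma cm_perm (s1 s2 : seq X) : perm_eq s1 s2 -> cm s1 = cm s2.
Proof. by move=> /permP s12; apply/funext => A; exact: s12. Qed.

Lemma cm_inj_perm (s1 s2 : seq X) : cm s1 = cm s2 -> perm_eq s1 s2.
Proof.
move=> s12; apply/permP => a.
have := congr1 (fun mu : Mf => mu (fun x => is_true (a x))) s12; rewrite /cm.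
by rewrite !(eq_count (a2 := a)) // => x; rewrite asboolb.
Qed.

Lemma atoms_cm (s : seq X) : perm_eq (atoms (cm s)) s.
Proof.
rewrite /atoms; case: pselect => [e|]; last by move=> /(_ (ex_intro _ s erefl)).
exact/cm_inj_perm/(projT2 (cid e)).
Qed.

Lemma cmint_cm (s : seq X) (h : X -> \bar R) : cmint (cm s) h = \sum_(x <- s) h x.
Proof. exact/perm_big/atoms_cm. Qed.

Lemma cm_setT (s : seq X) : cm s setT = size s.
Proof. by rewrite /cm (eq_count (a2 := predT)) ?count_predT // => x; apply/asboolP. Qed.

Lemma Mf_add_cm (s : seq X) x : Mf_add (cm s) x = cm (x :: s).
Proof. by apply/funext => A; rewrite /Mf_add /cm /= addnC. Qed.

Lemma measurable_cm_coords_eval d' (U : measurableType d') (xs : seq (U -> X))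
    (A : set X) (P : nat -> Prop) :
  measurable A -> measurable_coords xs ->
  measurable [set u | P (cm [seq x u | x <- xs] A)].
Proof.
move=> mA; elim: xs P => [|f xs IH] P /=.
  move=> _; have [P0|nP0] := pselect (P 0%N).
    by rewrite (_ : [set _ | _] = setT) //; apply/seteqP; split.
  by rewrite (_ : [set _ | _] = set0) //; apply/seteqP; split.
move=> [mf mxs].
have mfA : measurable (f @^-1` A) by rewrite -[_ @^-1` _]setTI; exact: mf.
rewrite (_ : [set _ | _] =
    (f @^-1` A `&` [set u | P (cm [seq x u | x <- xs] A).+1]) `|`
    (~` (f @^-1` A) `&` [set u | P (cm [seq x u | x <- xs] A)])).
  apply: measurableU; apply: measurableI => //; last exact: IH.
    exact: (IH (fun k => P k.+1)).
  exact: measurableC.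
apply/seteqP; split => u /=; rewrite /cm /=; case: asboolP => Au /=;
  rewrite ?add1n ?add0n; [move=> ?; left|move=> ?; right|case=> -[]|case=> -[]] => //.
Qed.

Lemma measurable_cm_coords d' (U : measurableType d') (xs : seq (U -> X)) :
  measurable_coords xs ->
  measurable_fun setT (fun u => cm [seq x u | x <- xs] : @MfM d X).
Proof.
move=> mxs; apply: (@measurability _ _ _ (@MfM d X) setT _ (@Mf_gen d X)) => //.
move=> _ [_ [A [n [mA ->]]] <-]; rewrite setTI.
exact: measurable_cm_coords_eval (eq^~ n) mA mxs.
Qed.

Definition first_atom (h : X * @MfM d X -> \bar R) (s : seq X) : \bar R :=
  if s is x :: _ then h (x, cm s) else 0.

Lemma first_atom_ge0 h s : (forall z, 0 <= h z) -> 0 <= first_atom h s.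
Proof. by case: s => [|x s] h0 //=. Qed.

Lemma seq_measurable_first_atom h :
  measurable_fun setT h -> seq_measurable (first_atom h).
Proof.
move=> mh d' U [|f xs] mxs; first exact: measurable_cst.
apply: measurableT_comp mh _; apply: measurable_fun_pair; first exact: mxs.1.
exact: measurable_cm_coords mxs.
Qed.

Lemma first_atom_rot h (s : seq X) x0 i : (i < size s)%N ->
  first_atom h (rot i s) = h (nth x0 s i, cm s).
Proof.
move=> ilt; rewrite -(cm_perm (s1 := rot i s)) ?perm_rot //.
by rewrite /rot (drop_nth x0 ilt).
Qed.

Lemma first_atomZr h (k : R) s :
  first_atom (fun z => h z * k%:E) s = first_atom h s * k%:E.
Proof. by case: s => [|x s] /=; rewrite ?mul0e. Qed.

End counting_measures.

Section counting_integrals.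
Set Implicit Arguments. Unset Strict Implicit.
Context (d : measure_display) (X : measurableType d) (R : realType)
  (lam : {sigma_finite_measure set X -> \bar R}).
Local Open Scope ereal_scope.

Lemma iterint_cmint n (h : X * @MfM d X -> \bar R) :
  (forall z, 0 <= h z) -> measurable_fun setT h ->
  iterint lam n (fun s => cmint (cm s) (fun x => h (x, cm s))) =
  n%:R%:E * iterint lam n (first_atom h).
Proof.
move=> h0 mh.
transitivity (iterint lam n (fun s => \sum_(0 <= i < n) first_atom h (rot i s))).
  apply: eq_iterint => s <-; rewrite cmint_cm.
  case: s => [|x0 s]; first by rewrite big_nil big_geq.
  rewrite (big_nth x0); apply: eq_big_nat => i /andP[_ ilt].
  by rewrite (first_atom_rot _ x0).
rewrite iterint_sum; first last.
- by move=> i; apply/seq_measurable_rot/seq_measurable_first_atom.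
- by move=> i s; apply: first_atom_ge0.
rewrite (eq_big_nat _ _ (F2 := fun _ => iterint lam n (first_atom h))).
  by rewrite sumr_const_nat subn0 mule_natl.
move=> i /andP[_ ilt]; apply: iterint_rot; first exact: ltnW.
- by move=> s; apply: first_atom_ge0.
- exact: seq_measurable_first_atom.
Qed.

Lemma iterint_integral_Mf_add n (h : X * @MfM d X -> \bar R) :
  (forall z, 0 <= h z) -> measurable_fun setT h ->
  iterint lam n (fun s => \int[lam]_x h (x, Mf_add (cm s) x)) =
  iterint lam n.+1 (first_atom h).
Proof.
move=> h0 mh.
transitivity (iterint lam n (fun s => \int[lam]_x first_atom h (x :: s))).
  by apply: eq_iterint => s _; apply: eq_integral => x _; rewrite Mf_add_cm.
apply: iterint_integral_comm => [x s|]; first exact: first_atom_ge0.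
exact/seq_measurable_cons/seq_measurable_first_atom.
Qed.

End counting_integrals.

Lemma nneseries_shiftS (R : realType) (a : nat -> \bar R) :
  (forall n, (0 <= a n)%E) -> a 0%N = 0%E ->
  (\sum_(0 <= n <oo) a n = \sum_(0 <= n <oo) a n.+1)%E.
Proof.
move=> a0 a00; rewrite nneseries_recl // a00 add0e -nneseries_addn //.
by apply: eq_eseriesr => n _; rewrite addn1.
Qed.

Section thinning_constants.
Context (R : realType) (t : nat -> nat -> R) (p : nat -> R).
Hypothesis t_ge0 : forall n j, (j <= n)%N -> 0 <= t n j.
Hypothesis t_diag_gt0 : forall m, 0 < t m m.
Hypothesis p_ge0 : forall n, 0 <= p n.

Lemma Znorm_gt0 m : 0 < Znorm t m.
Proof.
rewrite /Znorm invr_gt0 big_nat_recr //= binn mul1r.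
apply: ltr_pwDr (t_diag_gt0 m) _; rewrite big_seq; apply: sumr_ge0 => j.
rewrite mem_index_iota => /andP[_ jm].
by apply: mulr_ge0 => //; apply: t_ge0; exact: ltnW.
Qed.

Lemma delta_const_ge0 m : 0 <= delta_const t m.
Proof.
rewrite /delta_const; apply: mulr_ge0; first by apply: divr_ge0; exact/ltW/Znorm_gt0.
by apply: divr_ge0; [apply: t_ge0; exact: leq_pred|exact: ltW].
Qed.

Lemma pi_const_ge0 m : 0 <= pi_const t p m.
Proof.
rewrite /pi_const; apply: mulr_ge0; last exact: divr_ge0.
apply: mulr_ge0; first by apply: divr_ge0; exact/ltW/Znorm_gt0.
by apply: divr_ge0; [exact: t_ge0|exact: ltW].
Qed.

Lemma delta_pi_balance m : (p m = 0 -> p m.+1 = 0) ->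
  p m.+1 / (m.+1)`!%:R * m.+1%:R * delta_const t m.+1 =
  p m / m`!%:R * pi_const t p m.
Proof.
(* For p_m = 0 the quotient p_(m+1) / p_m in pi_const is the junk value 0,
   and the support hypothesis makes the left side vanish as well. *)
rewrite /delta_const /pi_const /=.
have [->|pm0] := eqVneq (p m) 0 => [/(_ erefl) ->|_]; first by rewrite !(mul0r, mulr0).
rewrite factS natrM; field.
by rewrite pm0 !gt_eqF ?Znorm_gt0 ?ltr0n ?fact_gt0.
Qed.

End thinning_constants.

Section mixed_sample_balance.
Context (d : measure_display) (X : measurableType d) (R : realType)
  (lam : {sigma_finite_measure set X -> \bar R}) (t : nat -> nat -> R) (p : nat -> R).
Hypothesis t_ge0 : forall n j, (j <= n)%N -> 0 <= t n j.
Hypothesis t_diag_gt0 : forall m, 0 < t m m.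
Hypothesis p_ge0 : forall n, 0 <= p n.
Hypothesis p_supp : forall n0, p n0 = 0 -> forall n, (n0 <= n)%N -> p n = 0.
Variable g : X * @MfM d X -> \bar R.
Hypothesis g_ge0 : forall z, (0 <= g z)%E.
Hypothesis g_meas : measurable_fun setT g.
Local Open Scope ereal_scope.

Lemma mixed_sample_term_balance m :
  (p m.+1 / (m.+1)`!%:R)%:E * iterint lam m.+1 (fun s =>
    cmint (cm s) (fun x => g (x, cm s) * (delta_const t (cm s setT))%:E)) =
  (p m / m`!%:R)%:E * iterint lam m (fun s =>
    \int[lam]_x (g (x, Mf_add (cm s) x) * (pi_const t p (cm s setT))%:E)).
Proof.
set de := delta_const t m.+1; set pp := pi_const t p m.
have de0 : (0 <= de)%R by exact: delta_const_ge0.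
have pp0 : (0 <= pp)%R by exact: pi_const_ge0.
have gZ_ge0 k : (0 <= k)%R -> forall z, 0 <= g z * k%:E.
  by move=> k0 z; apply: mule_ge0; rewrite ?lee_fin.
have mgZ k : measurable_fun setT (fun z => g z * k%:E).
  by apply: emeasurable_funM => //; exact: measurable_cst.
have fa_ge0 s : 0 <= first_atom g s by exact: first_atom_ge0.
have mfa := seq_measurable_first_atom g_meas.
rewrite (eq_iterint lam (n := m.+1)
  (g := fun s => cmint (cm s) (fun x => g (x, cm s) * de%:E))); last first.
  by move=> s sz; rewrite cm_setT sz.
rewrite (eq_iterint lam (n := m)
  (g := fun s => \int[lam]_x (g (x, Mf_add (cm s) x) * pp%:E))); last first.
  by move=> s sz; rewrite cm_setT sz.
rewrite (iterint_cmint lam _ (gZ_ge0 _ de0) (mgZ de)).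
rewrite (iterint_integral_Mf_add lam _ (gZ_ge0 _ pp0) (mgZ pp)).
rewrite !(funext (first_atomZr g _)) !iterintZr //.
set I := iterint lam m.+1 (first_atom g).
rewrite ![I * _]muleC !muleA -!EFinM delta_pi_balance //.
by move=> pm0; exact: p_supp pm0 _ (leqnSn m).
Qed.

End mixed_sample_balance.

Theorem mainTheorem10 (d : measure_display) (X : measurableType d)
  (R : realType) (lam : probability X R)
  (t : nat -> nat -> R) (p : nat -> R)
  (t_ge0 : forall n j, (j <= n)%N -> 0 <= t n j)
  (t_diag_gt0 : forall m, 0 < t m m)
  (p_ge0 : forall n, 0 <= p n)
  (Xi_pos : (0 < Xi p)%E) (Xi_fin : (Xi p < +oo)%E)
  (p_supp : forall n0, p n0 = 0 -> forall n, (n0 <= n)%N -> p n = 0)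
  (g : (X * @MfM d X)%type -> \bar R)
  (g_ge0 : forall z, (0 <= g z)%E)
  (g_meas : measurable_fun setT g) :
  Pint lam p (fun mu : @MfM d X =>
    cmint mu (fun x => g (x, mu) * (delta_const t (mu setT))%:E)%E)
  = Pint lam p (fun mu : @MfM d X =>
    (\int[lam]_x (g (x, Mf_add mu x) * (pi_const t p (mu setT))%:E))%E).
Proof.
rewrite /Pint nneseries_shiftS.
- by congr (_ * _)%E; apply: eq_eseriesr => m _; exact: mixed_sample_term_balance.
- move=> n; apply: mule_ge0; first by rewrite lee_fin divr_ge0.
  apply: iterint_ge0 => s; rewrite cmint_cm; apply: sume_ge0 => x _.
  by apply: mule_ge0; rewrite ?lee_fin ?delta_const_ge0.
- by rewrite /= cmint_cm big_nil mule0.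
Qed.
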